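(* Let $(V,[\cdot,\cdot,\cdot],[\cdot,\cdot])$ be a Bol algebra over a field of characteristic $0$ and $U(V)$ its universal enveloping algebra. If $a,b\in V$ satisfy $[a,b]=0$, then the commutator $[L_a,L_b]=L_aL_b-L_bL_a$ of left multiplication operators on $U(V)$ is a derivation of $U(V)$.
   Context: A (left) Bol algebra is a vector space $V$ with a skew-symmetric bilinear bracket $[\cdot,\cdot]$ and a trilinear bracket $[\cdot,\cdot,\cdot]$ satisfying $[a,a,b]=0$, $[a,b,c]+[b,c,a]+[c,a,b]=0$, $[x,y,[a,b,c]]=[[x,y,a],b,c]+[a,[x,y,b],c]+[a,b,[x,y,c]]$, and $[a,b,[x,y]]=[[a,b,x],y]+[x,[a,b,y]]+[x,y,[a,b]]+[[a,b],[x,y]]$. Its universal enveloping algebra $U(V)$ (in the sense of Pérez-Izquierdo) is a unital non-associative bialgebra (comultiplication $\Delta(x)=\sum x_{(1)}\otimes x_{(2)}$, counit $\epsilon$) generated as a unital algebra by $V\subseteq U(V)$, $V$ being its space of primitive elements, satisfying $\sum a_{(1)}(y(a_{(2)}z))=\sum (a_{(1)}(ya_{(2)}))z$ for all $a,y,z\in U(V)$; in particular $(a,y,z)=-(y,a,z)$ for $a\in V$, $y,z\in U(V)$, where $(x,y,z)=(xy)z-x(yz)$, and for $a,b,c\in V$: $[a,b]=ab-ba$, $[a,b,c]=a(bc)-b(ac)-c(ab)+c(ba)$. $L_x$ denotes left multiplication by $x$. *)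

From HB Require Import structures.
From mathcomp Require Import all_boot all_order all_algebra.
Set Implicit Arguments. Unset Strict Implicit. Unset Printing Implicit Defensive.
Import GRing.Theory.
Local Open Scope ring_scope.

Section BolDefs.
Variable K : fieldType.

Definition bilinear_map (A B C : lmodType K) (f : A -> B -> C) : Prop :=
  (forall (c : K) x x' y, f (c *: x + x') y = c *: f x y + f x' y) /\
  (forall (c : K) x y y', f x (c *: y + y') = c *: f x y + f x y').

Definition trilinear_map (A : lmodType K) (C : lmodType K) (f : A -> A -> A -> C) : Prop :=
  (forall (c : K) x x' y z, f (c *: x + x') y z = c *: f x y z + f x' y z) /\
  (forall (c : K) x y y' z, f x (c *: y + y') z = c *: f x y z + f x y' z) /\
  (forall (c : K) x y z z', f x y (c *: z + z') = c *: f x y z + f x y z').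

Definition linear_map (A B : lmodType K) (f : A -> B) : Prop :=
  forall (c : K) x y, f (c *: x + y) = c *: f x + f y.

Definition bol_algebra (V : lmodType K) (br2 : V -> V -> V)
    (br3 : V -> V -> V -> V) : Prop :=
  [/\ bilinear_map br2 /\ (forall a b, br2 a b = - br2 b a),
      trilinear_map br3,
      (forall a b, br3 a a b = 0) /\
      (forall a b c, br3 a b c + br3 b c a + br3 c a b = 0),
      (forall x y a b c,
          br3 x y (br3 a b c) =
          br3 (br3 x y a) b c + br3 a (br3 x y b) c + br3 a b (br3 x y c)) &
      (forall a b x y,
          br3 a b (br2 x y) =
          br2 (br3 a b x) y + br2 x (br3 a b y) + br3 x y (br2 a b)
          + br2 (br2 a b) (br2 x y))].

(* ---------- non-associative bialgebras ----------
   A comultiplication is represented by a function Delta : U -> seq (U * U)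
   giving, for each x, a finite representative  sum_i p_i (x) q_i  of Delta(x)
   in U (x) U.  Sweedler sums  sum f(x_(1), x_(2))  for a bilinear map f are
   the sums of f over this list.  All axioms are stated through such sums for
   arbitrary bilinear (resp. trilinear) maps, so they only depend on the
   tensor Delta(x), not on the representative. *)
Variable U : lmodType K.

Definition sweedler (Delta : U -> seq (U * U)) (f : U -> U -> U) (x : U) : U :=
  \sum_(pq <- Delta x) f pq.1 pq.2.

Definition sweedler3r (Delta : U -> seq (U * U)) (g : U -> U -> U -> U) (x : U) : U :=
  \sum_(pq <- Delta x) \sum_(rs <- Delta pq.2) g pq.1 rs.1 rs.2.

Definition sweedler3l (Delta : U -> seq (U * U)) (g : U -> U -> U -> U) (x : U) : U :=
  \sum_(pq <- Delta x) \sum_(rs <- Delta pq.1) g rs.1 rs.2 pq.2.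

(* x is primitive: Delta(x) = x (x) 1 + 1 (x) x *)
Definition primitive (Delta : U -> seq (U * U)) (one : U) (x : U) : Prop :=
  forall f : U -> U -> U, bilinear_map f -> sweedler Delta f x = f x one + f one x.

Definition nonassoc_bialgebra (mul : U -> U -> U) (one : U)
    (Delta : U -> seq (U * U)) (eps : U -> K) : Prop :=
  [/\ bilinear_map mul /\
      (forall x, mul one x = x /\ mul x one = x),
      (forall f, bilinear_map f -> forall (c : K) x y,
          sweedler Delta f (c *: x + y) = c *: sweedler Delta f x + sweedler Delta f y) /\
      (forall g, trilinear_map g -> forall x, sweedler3l Delta g x = sweedler3r Delta g x),
      linear_map (eps : U -> K^o) /\
      (forall x, sweedler Delta (fun p q => eps p *: q) x = x /\
                 sweedler Delta (fun p q => eps q *: p) x = x),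
      (forall f, bilinear_map f -> sweedler Delta f one = f one one) /\ eps one = 1 &
      (forall f, bilinear_map f -> forall x y,
          sweedler Delta f (mul x y) =
          \sum_(pq <- Delta x) \sum_(rs <- Delta y) f (mul pq.1 rs.1) (mul pq.2 rs.2)) /\
      (forall x y, eps (mul x y) = eps x * eps y)].

Inductive generated (V : lmodType K) (iota : V -> U) (mul : U -> U -> U) (one : U)
  : U -> Prop :=
  | gen_one : generated iota mul one one
  | gen_gen v : generated iota mul one (iota v)
  | gen_add x y : generated iota mul one x -> generated iota mul one y ->
                  generated iota mul one (x + y)
  | gen_scale (c : K) x : generated iota mul one x -> generated iota mul one (c *: x)
  | gen_mul x y : generated iota mul one x -> generated iota mul one y ->
                  generated iota mul one (mul x y).

(* The universal enveloping algebra U(V) of the Bol algebra V, described through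
   the properties listed in the paper: a unital non-associative bialgebra,
   generated as a unital algebra by V (embedded by the injective linear map
   iota), with V its space of primitive elements, the brackets of V being
   induced by the product of U, and satisfying
     sum a_(1) (y (a_(2) z)) = sum (a_(1) (y a_(2))) z. *)
Definition bol_enveloping (V : lmodType K) (br2 : V -> V -> V)
    (br3 : V -> V -> V -> V) (iota : V -> U) (mul : U -> U -> U) (one : U)
    (Delta : U -> seq (U * U)) (eps : U -> K) : Prop :=
  [/\ nonassoc_bialgebra mul one Delta eps,
      linear_map iota /\ injective iota,
      (forall x, primitive Delta one x <-> exists v, x = iota v) /\
      (forall x, generated iota mul one x),
      (forall a b, iota (br2 a b) = mul (iota a) (iota b) - mul (iota b) (iota a)) /\
      (forall a b c, iota (br3 a b c) =
          mul (iota a) (mul (iota b) (iota c)) - mul (iota b) (mul (iota a) (iota c))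
          - mul (iota c) (mul (iota a) (iota b)) + mul (iota c) (mul (iota b) (iota a))) &
      (forall a y z,
          sweedler Delta (fun p q => mul p (mul y (mul q z))) a =
          sweedler Delta (fun p q => mul (mul p (mul y q)) z) a)].

Definition derivation (mul : U -> U -> U) (D : U -> U) : Prop :=
  linear_map D /\ (forall x y, D (mul x y) = mul (D x) y + mul x (D y)).

End BolDefs.

From HB Require Import structures.
From mathcomp Require Import all_boot all_order all_algebra.
Import GRing.Theory.
Set Implicit Arguments. Unset Strict Implicit.
Local Open Scope ring_scope.

(* For a primitive element P, the Sweedler identity of U(V) reads
   (P,y,z) = -(y,P,z), i.e. L_P L_y + L_y L_P = L_(Py + yP).  Writing
   x o y = xy + yx and D = [L_A, L_B], this anticommutation rule gives
   [D, L_y] = L_(A o (B o y)) - L_(B o (A o y)), and when AB = BA the same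
   rule shows A o (B o y) - B o (A o y) = D y, so D(yz) = (D y) z + y (D z). *)

Lemma linear_map0 (K : fieldType) (A B : lmodType K) (f : A -> B) :
  linear_map f -> f 0 = 0.
Proof.
move=> lin_f; have := lin_f 1 0 0; rewrite !scale1r !addr0 => f0D.
by apply: (addrI (f 0)); rewrite addr0 -f0D.
Qed.

Section Product.
Variables (K : fieldType) (U : lmodType K) (mul : U -> U -> U).
Hypothesis mul_bilinear : bilinear_map mul.

Local Notation "x ** y" := (mul x y) (at level 40, left associativity).

Lemma mulDl x x' y : (x + x') ** y = x ** y + x' ** y.
Proof. by have := mul_bilinear.1 1 x x' y; rewrite !scale1r. Qed.

Lemma mulDr x y y' : x ** (y + y') = x ** y + x ** y'.
Proof. by have := mul_bilinear.2 1 x y y'; rewrite !scale1r. Qed.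

Lemma mulBl x x' y : (x - x') ** y = x ** y - x' ** y.
Proof. by have := mul_bilinear.1 (-1) x' x y; rewrite !scaleN1r addrC => ->; rewrite addrC. Qed.

Lemma mulBr x y y' : x ** (y - y') = x ** y - x ** y'.
Proof. by have := mul_bilinear.2 (-1) x y' y; rewrite !scaleN1r addrC => ->; rewrite addrC. Qed.

Definition anticomm x y := x ** y + y ** x.

(* Equivalent to the skew-symmetry (P,y,z) = -(y,P,z) of the associator. *)
Definition skew_assoc P := forall y z, P ** (y ** z) + y ** (P ** z) = anticomm P y ** z.

Lemma skew_assoc_primitive (Delta : U -> seq (U * U)) (one P : U) :
  (forall x, one ** x = x /\ x ** one = x) ->
  (forall y z, sweedler Delta (fun p q => p ** (y ** (q ** z))) P =
               sweedler Delta (fun p q => p ** (y ** q) ** z) P) ->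
  primitive Delta one P -> skew_assoc P.
Proof.
move=> unit_mul sweedler_P prim_P y z; have [mZDl mZDr] := mul_bilinear.
have := sweedler_P y z; rewrite !prim_P; last 2 first.
- by split=> c x x' w; rewrite ?mZDl ?mZDr.
- by split=> c x x' w; rewrite ?mZDl ?mZDr.
by rewrite !(unit_mul _).1 !(unit_mul _).2 => ->; rewrite mulDl.
Qed.

Lemma skew_assoc_mulr P y z : skew_assoc P ->
  P ** (y ** z) = anticomm P y ** z - y ** (P ** z).
Proof. by move=> skew_P; rewrite -skew_P addrK. Qed.

Lemma anticommA P Q y : skew_assoc Q ->
  anticomm P (anticomm Q y) =
  P ** (Q ** y) + (P ** (y ** Q) + Q ** (y ** P) + y ** (Q ** P)).
Proof. by move=> skew_Q; rewrite {1}/anticomm -skew_Q /anticomm mulDr -!addrA. Qed.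

Lemma mul_mul_mulr P Q y z : skew_assoc P -> skew_assoc Q ->
  P ** (Q ** (y ** z)) =
  anticomm P (anticomm Q y) ** z
  - (anticomm Q y ** (P ** z) + anticomm P y ** (Q ** z)) + y ** (P ** (Q ** z)).
Proof.
move=> skew_P skew_Q.
rewrite (skew_assoc_mulr _ _ skew_Q) mulBr (skew_assoc_mulr _ _ skew_P).
by rewrite (skew_assoc_mulr y _ skew_P) opprB opprD !addrA addrAC.
Qed.

Variables A B : U.

Lemma commutator_linear : linear_map (fun x => A ** (B ** x) - B ** (A ** x)).
Proof. by move=> c x y; rewrite !mul_bilinear.2 scalerBr opprD addrACA. Qed.

Hypotheses (skew_A : skew_assoc A) (skew_B : skew_assoc B) (commAB : A ** B = B ** A).

Lemma anticomm_commutator y :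
  anticomm A (anticomm B y) - anticomm B (anticomm A y) = A ** (B ** y) - B ** (A ** y).
Proof.
rewrite !anticommA // commAB [B ** (y ** A) + _]addrC.
by rewrite [B ** (A ** y) + _]addrC addrKA.
Qed.

Lemma commutator_mulr y z :
  A ** (B ** (y ** z)) - B ** (A ** (y ** z)) =
  (A ** (B ** y) - B ** (A ** y)) ** z + y ** (A ** (B ** z) - B ** (A ** z)).
Proof.
rewrite (mul_mul_mulr y z skew_A skew_B) (mul_mul_mulr y z skew_B skew_A).
rewrite [anticomm B y ** _ + _]addrC -anticomm_commutator mulBl mulBr.
set C := (_ + anticomm B y ** (A ** z)); clearbody C.
by rewrite opprD addrACA opprB subrKA.
Qed.

End Product.

Theorem lemma2p1 (K : fieldType) (V U : lmodType K)
    (br2 : V -> V -> V) (br3 : V -> V -> V -> V)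
    (iota : V -> U) (mul : U -> U -> U) (one : U)
    (Delta : U -> seq (U * U)) (eps : U -> K) :
  [pchar K] =i pred0 ->
  bol_algebra br2 br3 ->
  bol_enveloping br2 br3 iota mul one Delta eps ->
  forall a b : V, br2 a b = 0 ->
  derivation mul (fun x => mul (iota a) (mul (iota b) x) - mul (iota b) (mul (iota a) x)).
Proof.
move=> _ _ [[[mul_bilinear unit_mul] _ _ _ _] [lin_iota _] [primitive_iota _]
  [iota_br2 _] sweedler_mul] a b br2_ab.
have skew_iota v : skew_assoc mul (iota v).
  by apply: skew_assoc_primitive (sweedler_mul _) _ => //; apply/primitive_iota; exists v.
have comm_ab : mul (iota a) (iota b) = mul (iota b) (iota a).
  by apply/eqP; rewrite -subr_eq0 -iota_br2 br2_ab linear_map0.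
split; first exact: commutator_linear.
exact: commutator_mulr.
Qed.
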